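(* Let $H_0=\{x\in\mathbb{R}^n:\sum x_i=0\}$, $\hat e_i=e_i-\frac1n\sum_k e_k$, $\Delta_n^0=\mathrm{Conv}\{\hat e_1,\dots,\hat e_n\}$. Let $A:H_0\to H_0$ be a non-singular linear map and $B=(A^* )^{-1}$, where $A^*$ is the adjoint with respect to the standard inner product restricted to $H_0$. Then $$\big(Root(A(\Delta_n^0))\big)^\circ=Zono(B(\Delta_n^0)),$$ polarity taken inside $H_0$.
   Context: For a simplex $\Delta_A=\mathrm{Conv}\{a_1,\dots,a_n\}$, the generalized root polytope is $Root(\Delta_A)=\mathrm{Conv}\{a_i-a_j:1\le i\ne j\le n\}$. For a non-degenerate simplex with vertices $a_1,\dots,a_m$ and barycenter $a$, $Zono(\Delta_A)=\sum_i[a,a_i]$ (Minkowski sum); so $Zono(B(\Delta_n^0))=\sum_i[0,B\hat e_i]$. For $K\subset H_0$ with $0$ in its relative interior, $K^\circ=\{y\in H_0:\langle y,x\rangle\le 1\ \forall x\in K\}$. *)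

From HB Require Import structures.
From mathcomp Require Import all_boot all_order all_algebra.
Set Implicit Arguments. Unset Strict Implicit. Unset Printing Implicit Defensive.
Import Order.TTheory GRing.Theory Num.Theory.
Local Open Scope ring_scope.

Definition dotv (R : realFieldType) (n : nat) (x y : 'cV[R]_n) : R :=
  \sum_(i < n) x i 0 * y i 0.

Definition H0 (R : realFieldType) (n : nat) (x : 'cV[R]_n) : Prop :=
  \sum_(i < n) x i 0 = 0.

Definition ehat (R : realFieldType) (n : nat) (i : 'I_n) : 'cV[R]_n :=
  delta_mx i 0 - (n%:R)^-1 *: const_mx 1.

Definition conv (R : realFieldType) (n : nat) (I : finType) (P : pred I)
    (v : I -> 'cV[R]_n) (x : 'cV[R]_n) : Prop :=
  exists lam : I -> R,
    [/\ forall i, 0 <= lam i,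
        forall i, ~~ P i -> lam i = 0,
        \sum_i lam i = 1 &
        x = \sum_i lam i *: v i].

Definition root_polytope (R : realFieldType) (n m : nat) (a : 'I_m -> 'cV[R]_n) :
    'cV[R]_n -> Prop :=
  conv (fun p : 'I_m * 'I_m => p.1 != p.2) (fun p => a p.1 - a p.2).

(* Zono(Delta_A) = sum_i [b, a_i] (Minkowski sum), b the barycenter of a_1..a_m *)
Definition zono (R : realFieldType) (n m : nat) (a : 'I_m -> 'cV[R]_n)
    (x : 'cV[R]_n) : Prop :=
  let b := (m%:R)^-1 *: \sum_(i < m) a i in
  exists t : 'I_m -> R,
    (forall i, 0 <= t i <= 1) /\ x = b + \sum_i t i *: (a i - b).

Definition polar0 (R : realFieldType) (n : nat) (K : 'cV[R]_n -> Prop)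
    (y : 'cV[R]_n) : Prop :=
  H0 y /\ forall x, K x -> dotv y x <= 1.

From mathcomp Require Import all_boot all_order all_algebra.
Import Order.TTheory GRing.Theory Num.Theory.
Local Open Scope ring_scope.

(* For y in H0 put z = A^* y.  By adjointness the constraint
   <y, A \hat e_i - A \hat e_j> <= 1 reads z_i - z_j <= 1, so y lies in the polar iff
   any two coordinates of z differ by at most 1.  A vector z of H0 has this property
   iff z = sum_i t_i \hat e_i with all t_i in [0, 1] (take t_i = z_i - min_k z_k), i.e.
   iff z lies in Zono(Delta_n^0); and y = B z, since B, a right inverse of A^* on the
   finite-dimensional space H0, is also a left inverse. *)

Lemma mulmx_ext {R : pzSemiRingType} {m n : nat} (M N : 'M[R]_(m, n)) :
  (forall x : 'cV_n, M *m x = N *m x) -> M = N.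
Proof.
move=> eqMN; apply/matrixP => i j.
by have := congr1 (fun v : 'cV_m => v i 0) (eqMN (delta_mx j 0)); rewrite -!colE !mxE.
Qed.

Lemma mulmx_inv_on_range {R : comPzRingType} {n : nat} (P M N : 'M[R]_n) :
  P *m P = P -> P *m M *m P = M *m P -> P *m N *m P = N *m P ->
  M *m N *m P = P -> N *m M *m P = P.
Proof.
(* D := P M P + (1 - P) and C := N P + (1 - P) satisfy D C = 1, hence C D = 1. *)
move=> PP PMP PNP MNP; set Q := 1%:M - P.
have PQ : P *m Q = 0 by rewrite mulmxBr mulmx1 PP subrr.
have QP : Q *m P = 0 by rewrite mulmxBl mul1mx PP subrr.
have QQ : Q *m Q = Q by rewrite mulmxBr mulmx1 QP subr0.
have PQ1 : P + Q = 1%:M by rewrite addrC subrK.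
clearbody Q.
pose D := P *m M *m P + Q; pose C := N *m P + Q.
have DC : D *m C = 1%:M.
  have PMPNP : P *m M *m P *m (N *m P) = P.
    by rewrite -!mulmxA [P *m (N *m P)]mulmxA PNP [M *m (N *m P)]mulmxA MNP PP.
  have QNP : Q *m (N *m P) = 0 by rewrite -PNP !mulmxA QP !mul0mx.
  by rewrite mulmxDl !mulmxDr PMPNP -mulmxA PQ mulmx0 QNP QQ addr0 add0r.
have DP : D *m P = M *m P by rewrite mulmxDl -mulmxA PP PMP QP addr0.
have CDP := congr1 (mulmx^~ P) (mulmx1C DC).
rewrite /= mul1mx -mulmxA DP in CDP.
rewrite -[RHS]CDP mulmxDl -PMP !mulmxA QP !mul0mx addr0 -[N *m P *m P]mulmxA PP.
by rewrite -[N *m P *m M]mulmxA -[RHS]mulmxA PMP mulmxA.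
Qed.

Lemma dotvE {R : realFieldType} {n : nat} (x y : 'cV[R]_n) : dotv x y = (x^T *m y) 0 0.
Proof. by rewrite mxE; apply: eq_bigr => i _; rewrite mxE. Qed.

Lemma dotvC {R : realFieldType} {n : nat} (x y : 'cV[R]_n) : dotv x y = dotv y x.
Proof. by apply: eq_bigr => i _; rewrite mulrC. Qed.

Lemma dotv_deltaB {R : realFieldType} {n : nat} (i j : 'I_n) (x : 'cV[R]_n) :
  dotv (delta_mx i 0 - delta_mx j 0) x = x i 0 - x j 0.
Proof. by rewrite dotvE linearB /= mulmxBl !trmx_delta -!rowE !mxE. Qed.

Section Convexity.
Context {R : realFieldType} {n : nat} {I : finType} (P : pred I) (v : I -> 'cV[R]_n).

Lemma conv_point i : P i -> conv P v (v i).
Proof.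
move=> Pi; exists (fun k => (k == i)%:R); split.
- by move=> k; rewrite ler0n.
- by move=> k; apply: contraNeq; rewrite pnatr_eq0 eqb0 negbK => /eqP ->.
- by rewrite (bigD1 i) //= big1 ?addr0 ?eqxx // => k /negbTE ->.
- by rewrite (bigD1 i) //= big1 ?addr0 ?eqxx ?scale1r // => k /negbTE ->; rewrite scale0r.
Qed.

Lemma dotv_conv_le (y x : 'cV[R]_n) (c : R) :
  (forall i, P i -> dotv y (v i) <= c) -> conv P v x -> dotv y x <= c.
Proof.
move=> le_c [lam [lam_ge0 lam_out lam_sum ->]].
have dotv_sumr : dotv y (\sum_i lam i *: v i) = \sum_i lam i * dotv y (v i).
  rewrite dotvE mulmx_sumr summxE; apply: eq_bigr => i _.
  by rewrite -scalemxAr mxE dotvE.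
rewrite dotv_sumr -[c]mul1r -lam_sum mulr_suml; apply: ler_sum => i _.
have [Pi | nPi] := boolP (P i); first exact: ler_wpM2l (le_c i Pi).
by rewrite lam_out // !mul0r.
Qed.

Lemma polar0_convP y :
  polar0 (conv P v) y <-> H0 y /\ forall i, P i -> dotv y (v i) <= 1.
Proof.
split=> [[y0 le1] | [y0 le1]]; split=> //.
- by move=> i Pi; apply: le1; apply: conv_point.
- by move=> x; apply: dotv_conv_le.
Qed.

End Convexity.

Section SimplexPolytopes.
Context {R : realFieldType} {n m : nat} (a : 'I_m -> 'cV[R]_n).

Lemma polar0_root_polytopeP y :
  polar0 (root_polytope a) y <-> H0 y /\ forall i j, dotv y (a i - a j) <= 1.
Proof.
apply: (iff_trans (polar0_convP _ _ _)); split=> -[y0 le1]; split=> //= i j.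
have [<- | ij] := eqVneq i j; last exact: (le1 (i, j)).
by rewrite subrr /dotv big1 ?ler01 // => k _; rewrite mxE mulr0.
Qed.

Lemma zono_centeredP y : \sum_i a i = 0 ->
  zono a y <-> exists t : 'I_m -> R, (forall i, 0 <= t i <= 1) /\ y = \sum_i t i *: a i.
Proof.
rewrite /zono /= => ->; rewrite scaler0.
have drop0 (t : 'I_m -> R) : \sum_i t i *: (a i - 0) = \sum_i t i *: a i.
  by apply: eq_bigr => i _; rewrite subr0.
by split=> -[t [t01 ->]]; exists t; rewrite add0r drop0.
Qed.

End SimplexPolytopes.

Section ProjectionH0.
Context {R : realFieldType} {n : nat}.
Hypothesis n_gt0 : (0 < n)%N.

Definition projH0 : 'M[R]_n := 1%:M - (n%:R)^-1 *: (const_mx 1 : 'M_n).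

Lemma projH0_mulE (x : 'cV[R]_n) :
  projH0 *m x = x - ((n%:R)^-1 * \sum_i x i 0) *: const_mx 1.
Proof.
rewrite mulmxBl mul1mx -scalemxAl; congr (_ - _); apply/matrixP => i j.
rewrite (ord1 j) !mxE mulr1; congr (_ * _); apply: eq_bigr => k _.
by rewrite mxE mul1r.
Qed.

Lemma projH0_entryB (x : 'cV[R]_n) i j :
  (projH0 *m x) i 0 - (projH0 *m x) j 0 = x i 0 - x j 0.
Proof. by rewrite projH0_mulE !mxE opprB addrA subrK. Qed.

Lemma projH0_id (x : 'cV[R]_n) : H0 x -> projH0 *m x = x.
Proof. by rewrite projH0_mulE => x0; rewrite [\sum_i _]x0 mulr0 scale0r subr0. Qed.

Lemma projH0_const (c : R) : projH0 *m (const_mx c : 'cV_n) = 0.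
Proof.
rewrite projH0_mulE (eq_bigr (fun=> c)) => [|i _]; last by rewrite mxE.
rewrite sumr_const card_ord -[c *+ n]mulr_natr mulrCA mulVf ?pnatr_eq0 -?lt0n // mulr1.
by apply/matrixP => i j; rewrite !mxE mulr1 subrr.
Qed.

Lemma H0_projH0 (x : 'cV[R]_n) : H0 (projH0 *m x).
Proof.
rewrite /H0 projH0_mulE (eq_bigr (fun i => x i 0 - (n%:R)^-1 * \sum_k x k 0)).
  rewrite sumrB sumr_const card_ord -[X in _ - X]mulr_natl mulrA.
  by rewrite mulfV ?pnatr_eq0 -?lt0n // mul1r subrr.
by move=> i _; rewrite !mxE mulr1.
Qed.

Lemma projH0_idem : projH0 *m projH0 = projH0.
Proof. by apply: mulmx_ext => x; rewrite -mulmxA projH0_id //; apply: H0_projH0. Qed.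

Lemma ehat_projH0 (i : 'I_n) : ehat R i = projH0 *m delta_mx i 0.
Proof. by rewrite mulmxBl mul1mx -scalemxAl -colE col_const. Qed.

Lemma sum_scale_ehat (t : 'I_n -> R) : \sum_i t i *: ehat R i = projH0 *m \col_i t i.
Proof.
rewrite (eq_bigr (fun i => projH0 *m (t i *: delta_mx i 0))) => [|i _]; last first.
  by rewrite ehat_projH0 scalemxAr.
rewrite -mulmx_sumr; congr (_ *m _); apply/matrixP => k j.
rewrite (ord1 j) summxE (bigD1 k) //= big1 ?addr0 => [|i ik]; rewrite !mxE.
  by rewrite !eqxx mulr1.
by rewrite eq_sym (negbTE ik) mulr0.
Qed.

Lemma ehatB (i j : 'I_n) : ehat R i - ehat R j = delta_mx i 0 - delta_mx j 0.
Proof. by rewrite /ehat opprB addrA subrK. Qed.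

Lemma sum_ehat : \sum_i ehat R i = 0 :> 'cV[R]_n.
Proof.
rewrite (eq_bigr (fun i => 1 *: ehat R i)) => [|i _]; last by rewrite scale1r.
rewrite sum_scale_ehat -(projH0_const 1); congr (_ *m _).
by apply/matrixP => i j; rewrite !mxE.
Qed.

Lemma H0_inverse_sym (M N : 'M[R]_n) :
  (forall y, H0 y -> H0 (M *m y)) -> (forall y, H0 y -> H0 (N *m y)) ->
  (forall y, H0 y -> M *m (N *m y) = y) -> forall y, H0 y -> N *m (M *m y) = y.
Proof.
move=> M_H0 N_H0 MN y y0.
have on_H0 (L : 'M[R]_n) :
    (forall y, H0 y -> H0 (L *m y)) -> projH0 *m L *m projH0 = L *m projH0.
  move=> L_H0; apply: mulmx_ext => x.
  by rewrite -!mulmxA projH0_id //; apply/L_H0/H0_projH0.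
have NMc : N *m M *m projH0 = projH0.
  apply: mulmx_inv_on_range; rewrite ?projH0_idem ?on_H0 //.
  by apply: mulmx_ext => x; rewrite -!mulmxA MN //; apply: H0_projH0.
by rewrite -(projH0_id _ y0) !mulmxA NMc.
Qed.

Lemma zono_ehat_spreadP (z : 'cV[R]_n) : H0 z ->
  (forall i j, z i 0 - z j 0 <= 1) <->
  exists t : 'I_n -> R, (forall i, 0 <= t i <= 1) /\ z = \sum_i t i *: ehat R i.
Proof.
move=> z0; split=> [spread | [t [t01 ->]] i j]; last first.
  have /andP[_ ti_le1] := t01 i; have /andP[tj_ge0 _] := t01 j.
  by rewrite sum_scale_ehat projH0_entryB !mxE lerBlDr (le_trans ti_le1) // lerDl.
pose i0 := [arg min_(i < Ordinal n_gt0) z i 0]%O.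
have z_min k : z i0 0 <= z k 0 by rewrite /i0; case: arg_minP => // m _; apply.
exists (fun k => z k 0 - z i0 0); split=> [k | ]; first by rewrite subr_ge0 z_min spread.
rewrite sum_scale_ehat (_ : \col_k _ = z - const_mx (z i0 0)).
  by rewrite mulmxBr projH0_const projH0_id // subr0.
by apply/matrixP => k j; rewrite (ord1 j) !mxE.
Qed.

End ProjectionH0.

Theorem mainTheorem10 (R : realFieldType) (n : nat) (A Astar B : 'M[R]_n) :
  (0 < n)%N ->
  (forall x, H0 x -> H0 (A *m x)) ->
  (forall x, H0 x -> A *m x = 0 -> x = 0) ->
  (forall y, H0 y -> H0 (Astar *m y)) ->
  (forall x y, H0 x -> H0 y -> dotv (A *m x) y = dotv x (Astar *m y)) ->
  (forall y, H0 y -> H0 (B *m y)) ->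
  (forall y, H0 y -> Astar *m (B *m y) = y) ->
  forall y : 'cV[R]_n,
    polar0 (root_polytope (fun i : 'I_n => A *m ehat R i)) y <->
    zono (fun i : 'I_n => B *m ehat R i) y.
Proof.
move=> n_gt0 _ _ Astar_H0 adjA B_H0 AstarB y.
have BAstar := H0_inverse_sym n_gt0 _ _ Astar_H0 B_H0 AstarB.
have dotv_root (u : 'cV_n) i j : H0 u ->
    dotv u (A *m ehat R i - A *m ehat R j) = (Astar *m u) i 0 - (Astar *m u) j 0.
  move=> u0; have e0 : H0 (ehat R i - ehat R j).
    by rewrite !ehat_projH0 -mulmxBr; apply: H0_projH0.
  by rewrite -mulmxBr dotvC adjA // ehatB dotv_deltaB.
have sum_Behat : \sum_i B *m ehat R i = 0 by rewrite -mulmx_sumr sum_ehat // mulmx0.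
have scale_B (t : 'I_n -> R) : \sum_i t i *: (B *m ehat R i) = B *m \sum_i t i *: ehat R i.
  by rewrite mulmx_sumr; apply: eq_bigr => i _; rewrite scalemxAr.
split=> [/polar0_root_polytopeP [y0 spread] | /zono_centeredP [// | t [t01 ->]]].
- have spreadA i j : (Astar *m y) i 0 - (Astar *m y) j 0 <= 1 by rewrite -dotv_root.
  have [t [t01 Astar_y]] := (zono_ehat_spreadP n_gt0 _ (Astar_H0 _ y0)).1 spreadA.
  by apply/zono_centeredP => //; exists t; rewrite scale_B -Astar_y BAstar.
- rewrite scale_B; set w := \sum_i t i *: ehat R i.
  have w0 : H0 w by rewrite /w sum_scale_ehat //; apply: H0_projH0.
  apply/polar0_root_polytopeP; split=> [|i j]; first exact: B_H0.
  rewrite dotv_root ?AstarB //; last exact: B_H0.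
  by apply: (zono_ehat_spreadP n_gt0 _ w0).2; exists t.
Qed.
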